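(* Let $p$ be a prime and $n$ a positive integer with $p^n\equiv 2 \pmod 3$, let $d=\frac{2p^n-1}{3}$ and $F(x)=x^d$ on $\mathrm{GF}(p^n)$. For every $c\in\mathrm{GF}(p^n)$ with $c\neq1$, ${}_c\Delta_F\le 3$.
   Context: For a function $F:\mathrm{GF}(p^n)\to\mathrm{GF}(p^n)$ and $a,b,c\in\mathrm{GF}(p^n)$, let ${}_c\Delta_F(a,b)=\#\{x\in\mathrm{GF}(p^n): F(x+a)-cF(x)=b\}$. The $c$-differential uniformity of $F$ is ${}_c\Delta_F=\max\{{}_c\Delta_F(a,b): a,b\in\mathrm{GF}(p^n),\ \text{and } a\neq 0 \text{ if } c=1\}$. *)

From HB Require Import structures.
From mathcomp Require Import all_boot all_order all_algebra all_field.
Set Implicit Arguments. Unset Strict Implicit. Unset Printing Implicit Defensive.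
Import GRing.Theory.
Local Open Scope ring_scope.

Definition cDelta (K : finFieldType) (f : K -> K) (c a b : K) : nat :=
  #|[set x : K | f (x + a) - c * f x == b]|.

Definition cDU (K : finFieldType) (f : K -> K) (c : K) : nat :=
  (\max_(ab : K * K | (c != 1%R) || (ab.1 != 0%R)) cDelta f c ab.1 ab.2)%N.

From HB Require Import structures.
From mathcomp Require Import all_boot all_order all_algebra all_field.
From mathcomp Require Import ring zify.
Set Implicit Arguments. Unset Strict Implicit. Unset Printing Implicit Defensive.
Local Open Scope ring_scope.
Import GRing.Theory.

(* Since [3 d = 2 q - 1 = 1 mod (q - 1)], the map [x |-> x^d] is the inverse of
   the cube permutation of GF(q).  Writing [y = x^d], the equation
   [(x + a)^d - c x^d = b] forces [x = y^3] and [x + a = (b + c y)^3], so [y] is a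
   root of [(b + c y)^3 - y^3 - a], a cubic with leading coefficient [c^3 - 1],
   which is nonzero because cubing is injective and [c != 1].  Distinct
   solutions [x] give distinct roots [y], hence there are at most three. *)

Lemma card_roots_lt_size (R : finIdomainType) (P : {poly R}) :
  P != 0 -> (#|[set x | root P x]| < size P)%N.
Proof.
move=> P0; rewrite cardE; apply: max_poly_roots P0 _ (enum_uniq _).
by apply/allP => x; rewrite mem_enum inE.
Qed.

Lemma card_cubic_roots_le3 (R : finIdomainType) (a b c : R) :
  c ^+ 3 != 1 -> (#|[set y : R | ((b + c * y) ^+ 3 == y ^+ 3 + a)%R]| <= 3)%N.
Proof.
move=> c3; pose E := nth 0 [:: b ^+ 3 - a; 3%:R * b ^+ 2 * c;
                                3%:R * b * c ^+ 2; c ^+ 3 - 1].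
pose P := \poly_(i < 4) E i.
have P_horner y : P.[y] = (b + c * y) ^+ 3 - (y ^+ 3 + a).
  by rewrite horner_poly !big_ord_recl big_ord0 /E /bump /=; ring.
have P0 : P != 0.
  apply: contra_neq c3 => P0; apply/eqP; rewrite -subr_eq0.
  by have := coef_poly 4 E 3; rewrite -/P P0 coef0 /E /= => <-.
have sizeP : (size P <= 4)%N by apply: size_poly.
rewrite -ltnS (leq_trans _ sizeP) // (leq_trans _ (card_roots_lt_size P0)) //.
by apply/subset_leq_card/subsetP => y; rewrite !inE /root P_horner subr_eq0.
Qed.

Lemma exponent_times_three (q : nat) :
  (q %% 3 = 2)%N -> (3 * ((2 * q - 1) %/ 3) = 2 * q - 1)%N.
Proof. lia. Qed.

Section InverseCube.

Variables (K : finFieldType) (d : nat).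
Hypothesis three_d : (3 * d = 2 * #|K| - 1)%N.

Lemma expd_cubeK (x : K) : (x ^+ d) ^+ 3 = x.
Proof.
have K_gt0 : (0 < #|K|)%N by apply/card_gt0P; exists 0.
rewrite -exprM mulnC three_d.
have -> : (2 * #|K| - 1 = #|K| + (#|K| - 1))%N by lia.
by rewrite exprD expf_card -exprS subn1 prednK // expf_card.
Qed.

Lemma cube_expdK (x : K) : (x ^+ 3) ^+ d = x.
Proof. by rewrite exprAC expd_cubeK. Qed.

Lemma cDelta_expd_le3 (c a b : K) :
  c != 1 -> (cDelta (fun x : K => x ^+ d) c a b <= 3)%N.
Proof.
move=> c1; have c3 : c ^+ 3 != 1.
  by apply: contra_neq c1 => c3; rewrite -(cube_expdK c) c3 expr1n.
have expd_inj : injective (fun x : K => x ^+ d).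
  by move=> x y /= e; rewrite -(expd_cubeK x) -(expd_cubeK y) e.
apply: leq_trans (card_cubic_roots_le3 a b c3); rewrite /cDelta.
rewrite -(card_imset _ expd_inj); apply/subset_leq_card/subsetP => y.
case/imsetP=> x; rewrite !inE => /eqP eq_b ->.
by rewrite -eq_b subrK !expd_cubeK.
Qed.

End InverseCube.

Theorem theorem5 (p n : nat) (K : finFieldType) :
  prime p -> (0 < n)%N -> #|K| = (p ^ n)%N -> (p ^ n %% 3 = 2)%N ->
  forall c : K, c != 1 ->
  (cDU (fun x : K => x ^+ ((2 * p ^ n - 1) %/ 3)) c <= 3)%N.
Proof.
move=> _ _ cardK q_mod3 c c1.
have three_d : (3 * ((2 * p ^ n - 1) %/ 3) = 2 * #|K| - 1)%N.
  by rewrite cardK exponent_times_three.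
by apply/bigmax_leqP => -[a b] _; exact: cDelta_expd_le3 three_d _ _ _ c1.
Qed.
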